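(* Let $d\ge 3$ be odd. If $w$ is a word over $A\cup A^{-1}$ that represents the identity element of $G_d$, then the exponent sum $|w|_{a_i}$ is $0$ for every $i\in\{1,\dots,d\}$.
   Context: Let $d\ge 3$, $X=\{1,\dots,d\}$, $T$ the $d$-regular rooted tree with vertex set $X^*$. $\mathrm{Aut}(T)$ is the group of root-preserving automorphisms with product left-to-right: $(gh)(u)=h(g(u))$. Sections $g|_u$ are defined by $g(uv)=g(u)\,g|_u(v)$; we write $g=(g|_1,\dots,g|_d)\lambda_g$ with $\lambda_g\in S_d$ the action on the first level; $e$ is the identity; $\overline{j}\in\{1,\dots,d\}$ denotes $j$ mod $d$. $G_d=\langle A\rangle\le\mathrm{Aut}(T)$, $A=\{a_1,\dots,a_d\}$, where $a_i$ acts on the first level as $(i\ \overline{i+1})$, with $a_i|_i=a_i$, $a_i|_{\overline{i+1}}=a_{\overline{i+1}}$, and $a_i|_x=e$ otherwise. For a word $w$ over $A\cup A^{-1}$ and $p\in A$, $|w|_p$ denotes the exponent sum of $p$ in $w$ (number of occurrences of $p$ minus number of occurrences of $p^{-1}$). *)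

From mathcomp Require Import all_boot all_order all_algebra.
Set Implicit Arguments. Unset Strict Implicit. Unset Printing Implicit Defensive.

(* Letters X = {1,...,d} are encoded as 'I_d = {0,...,d-1} (x+1 <-> x).
   Successor mod d ("\overline{j+1}") is ordS. Vertices of T are seq 'I_d. *)

(* Action of a generator a_i (inv = false) or its inverse a_i^{-1}
   (inv = true) on a vertex, following a_i = (a_i|_1,...,a_i|_d) (i i+1)
   with a_i|_i = a_i, a_i|_{i+1} = a_{i+1}, other sections trivial:
     a_i (i v)     = (i+1) a_i(v),      a_i ((i+1) v) = i a_{i+1}(v),
     a_i^{-1}((i+1) v) = i a_i^{-1}(v), a_i^{-1}(i v) = (i+1) a_{i+1}^{-1}(v). *)
Fixpoint gen_act (d : nat) (inv : bool) (i : 'I_d) (u : seq 'I_d) : seq 'I_d :=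
  match u with
  | [::] => [::]
  | x :: v =>
    if ~~ inv then
      if x == i then ordS i :: gen_act inv i v
      else if x == ordS i then i :: gen_act inv (ordS i) v
      else x :: v
    else
      if x == ordS i then i :: gen_act inv i v
      else if x == i then ordS i :: gen_act inv (ordS i) v
      else x :: v
  end.

(* A word over A ∪ A^{-1}: a letter (i, false) is a_i, (i, true) is a_i^{-1}. *)
Definition word (d : nat) := seq ('I_d * bool).

(* Action of the element of Aut(T) represented by w; products are
   left-to-right, (gh)(u) = h(g(u)), so the first letter acts first. *)
Definition word_act (d : nat) (w : word d) (u : seq 'I_d) : seq 'I_d :=
  foldl (fun u l => gen_act l.2 l.1 u) u w.

Definition represents_identity (d : nat) (w : word d) : Prop :=
  forall u : seq 'I_d, word_act w u = u.

Definition exp_sum (d : nat) (w : word d) (i : 'I_d) : int :=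
  (count (pred1 (i, false)) w)%:Z - (count (pred1 (i, true)) w)%:Z.

From mathcomp Require Import all_boot all_order all_algebra perm.
From mathcomp Require Import zify.
Set Implicit Arguments. Unset Strict Implicit. Unset Printing Implicit Defensive.
Import GRing.Theory.

(* On the first level a_i^{+-1} acts as the
   transposition (i i+1), with sections a_i^{+-1} and a_{i+1}^{+-1} at i and
   i+1 and trivial sections elsewhere.  Hence the sections w|_x of an identity
   word are identity words, their lengths add up to 2|w|, and their exponent
   sums at a_{k+1} add up to |w|_{a_{k+1}} + |w|_{a_k}.  If all w|_x are
   balanced, e(k+1) = -e(k) around the cycle Z/d, which has odd length, so
   e = 0.  A section is never longer than w, and a full-length section of a
   word containing a factor a_i^{-1} a_j contains a cancelling factor
   a_c^{-1} a_c, so it can be shortened.  Up to rotation, every word has such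
   a factor unless all its letters have the same sign; and a nonempty word of
   constant sign is never the identity: its shorter sections would be
   balanced, hence empty, which forces full sections at i and i+1 (for a
   first letter a_i^{+-1}); then the second letter is a_i^{+-1} too, while the
   section at i, again of constant sign and full length, starts with a_i and
   a_{i+1}. *)

Section WordSections.

Variable d : nat.
Local Notation letter := ('I_d * bool)%type.
Implicit Types (i j k x y : 'I_d) (l : letter) (w : word d).

Lemma ordS_neq (d_gt1 : 1 < d) i : ordS i != i.
Proof.
apply/eqP => /(congr1 val) /=; move: (ltn_ord i); move: (val i) => m.
rewrite leq_eqVlt => /orP [/eqP Ed | /modn_small ->]; last lia.
by rewrite Ed modnn; lia.
Qed.

Lemma ordS_in_pair (d_gt2 : 2 < d) i j :
  i \in [:: j; ordS j] -> ordS i \in [:: j; ordS j] -> i = j.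
Proof.
have ordSS_neq k : ordS (ordS k) != k.
  apply/eqP => /(congr1 val) /=.
  rewrite -[(_ %% d).+1]addn1 modnDml addn1; move: (ltn_ord k); move: (val k) => m.
  rewrite leq_eqVlt => /orP [/eqP Ed | ]; first by rewrite -Ed -[m.+2]add1n modnDr modn_small; lia.
  rewrite leq_eqVlt => /orP [/eqP Ed | /modn_small ->]; last lia.
  by rewrite Ed modnn; lia.
rewrite !inE => /orP [/eqP -> // | /eqP ->] /orP [/eqP Ej | /eqP /ordS_inj //].
by move: (ordSS_neq j); rewrite Ej eqxx.
Qed.

Definition letter_perm l : {perm 'I_d} := tperm l.1 (ordS l.1).

(* [None] encodes a trivial section. *)
Definition letter_section l x : option letter :=
  let: (i, b) := l in
  if b then
    if x == ordS i then Some (i, b) else if x == i then Some (ordS i, b) else None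
  else
    if x == i then Some (i, b) else if x == ordS i then Some (ordS i, b) else None.

Lemma gen_act_cons l x v :
  gen_act l.2 l.1 (x :: v) =
  letter_perm l x :: oapp (fun l' => gen_act l'.2 l'.1 v) v (letter_section l x).
Proof.
case: l => i [] /=; rewrite /letter_perm /=.
- case: (eqVneq x (ordS i)) => [-> | xNSi]; first by rewrite tpermR.
  case: (eqVneq x i) => [-> | xNi]; first by rewrite tpermL.
  by rewrite tpermD // eq_sym.
- case: (eqVneq x i) => [-> | xNi]; first by rewrite tpermL.
  case: (eqVneq x (ordS i)) => [-> | xNSi]; first by rewrite tpermR.
  by rewrite tpermD // eq_sym.
Qed.

Lemma letter_sectionP l x l' : letter_section l x = Some l' ->
  [/\ l'.1 = (if l.2 then letter_perm l x else x), l'.2 = l.2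
    & x \in [:: l.1; ordS l.1]].
Proof.
rewrite /letter_perm !inE; case: l => i [] /=.
- case: (eqVneq x (ordS i)) => [-> [<-] | _]; first by rewrite tpermR orbT.
  by case: (eqVneq x i) => [-> [<-] | //]; rewrite tpermL ?eqxx.
- case: (eqVneq x i) => [-> [<-] // | _].
  by case: (eqVneq x (ordS i)) => [-> [<-] | //]; rewrite ?eqxx ?orbT.
Qed.

Lemma letter_section_None l x : x \notin [:: l.1; ordS l.1] -> letter_section l x = None.
Proof. by case: l => i [] /=; rewrite !inE negb_or => /andP [/negbTE -> /negbTE ->]. Qed.

Fixpoint word_perm w x : 'I_d :=
  if w is l :: w' then word_perm w' (letter_perm l x) else x.

Fixpoint word_section w x : word d :=
  if w is l :: w' then seq_of_opt (letter_section l x) ++ word_section w' (letter_perm l x)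
  else [::].

Lemma word_section_cons l w x :
  word_section (l :: w) x = seq_of_opt (letter_section l x) ++ word_section w (letter_perm l x).
Proof. by []. Qed.

Lemma word_act_cat w1 w2 u : word_act (w1 ++ w2) u = word_act w2 (word_act w1 u).
Proof. exact: foldl_cat. Qed.

Lemma word_act_cons_vertex w x v :
  word_act w (x :: v) = word_perm w x :: word_act (word_section w x) v.
Proof.
elim: w x v => [|l w IH] x v //.
rewrite -[word_act (l :: w) _]/(word_act w (gen_act l.2 l.1 (x :: v))).
rewrite gen_act_cons IH /= word_act_cat.
by case: letter_section.
Qed.

Lemma represents_identity_section w x : represents_identity w ->
  word_perm w x = x /\ represents_identity (word_section w x).
Proof.
move=> idw; split; first by have := idw [:: x]; rewrite word_act_cons_vertex => -[].
by move=> v; have := idw (x :: v); rewrite word_act_cons_vertex => -[].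
Qed.

Lemma gen_actK b i : cancel (gen_act b i) (gen_act (~~ b) i).
Proof.
move=> u; elim: u i => [|x v IH] i //; move: IH.
case: b => /= IH.
- case: (eqVneq x (ordS i)) => [-> | xNSi] /=; first by rewrite eqxx IH.
  case: (eqVneq x i) => [Exi | xNi] /=; last by rewrite (negbTE xNi) (negbTE xNSi).
  by subst x; rewrite eq_sym (negbTE xNSi) eqxx IH.
- case: (eqVneq x i) => [-> | xNi] /=; first by rewrite eqxx IH.
  case: (eqVneq x (ordS i)) => [Exi | xNSi] /=; last by rewrite (negbTE xNSi) (negbTE xNi).
  by subst x; rewrite eq_sym (negbTE xNi) eqxx IH.
Qed.

Definition word_inv w : word d := rev (map (fun l => (l.1, ~~ l.2)) w).

Lemma word_invK w : cancel (word_act (word_inv w)) (word_act w).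
Proof.
elim: w => [|l w IH] u //.
rewrite /word_inv /= rev_cons -cats1 -/(word_inv w) word_act_cat.
by rewrite [word_act [:: _] _]/= -{1}(negbK l.2) gen_actK.
Qed.

Lemma represents_identity_rot (u v : word d) :
  represents_identity (u ++ v) -> represents_identity (v ++ u).
Proof.
move=> iduv x; have := iduv (word_act (word_inv u) x).
by rewrite !word_act_cat word_invK => ->; rewrite word_invK.
Qed.

Lemma represents_identity_cancel w1 w2 a b :
  represents_identity (w1 ++ (a, b) :: (a, ~~ b) :: w2) -> represents_identity (w1 ++ w2).
Proof.
move=> idw u; rewrite -{2}(idw u) !word_act_cat.
by rewrite -[word_act (_ :: _) _]/(word_act w2 (gen_act (~~ b) a (gen_act b a _))) gen_actK.
Qed.

Definition letter_exp l k : int := if l.1 == k then (if l.2 then -1 else 1)%R else 0%R.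

Lemma exp_sumE w k : exp_sum w k = (\sum_(l <- w) letter_exp l k)%R.
Proof.
rewrite /exp_sum; elim: w => [|[i b] w IH]; first by rewrite big_nil.
rewrite big_cons -IH /letter_exp /= !xpair_eqE.
by case: (i == k); case: b => /=; lia.
Qed.

Lemma exp_sum_catC (u v : word d) k : exp_sum (u ++ v) k = exp_sum (v ++ u) k.
Proof. by rewrite !exp_sumE !big_cat /= addrC. Qed.

Lemma exp_sum_cancel w1 w2 a b k :
  exp_sum (w1 ++ (a, b) :: (a, ~~ b) :: w2) k = exp_sum (w1 ++ w2) k.
Proof.
rewrite !exp_sumE !big_cat /= !big_cons /letter_exp /=.
by case: (a == k); case: b => /=; lia.
Qed.

Lemma sum_letter_section (d_gt1 : 1 < d) (V : nmodType) (f : letter -> V) l :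
  (\sum_x \sum_(l' <- seq_of_opt (letter_section l x)) f l' = f l + f (ordS l.1, l.2))%R.
Proof.
have SiNi := ordS_neq d_gt1 l.1.
rewrite (bigD1 l.1) // (bigD1 (ordS l.1)) //= [X in (_ + (_ + X))%R]big1 ?addr0; last first.
  move=> x /andP [xNi xNSi].
  by rewrite letter_section_None ?big_nil // !inE negb_or xNi xNSi.
case: l SiNi => i [] /= SiNi; rewrite eqxx.
- by rewrite eq_sym (negbTE SiNi) eqxx /= !big_seq1; apply: addrC.
- by rewrite (negbTE SiNi) eqxx /= !big_seq1.
Qed.

Lemma sum_word_section (d_gt1 : 1 < d) (V : nmodType) (f : letter -> V) w :
  (\sum_x \sum_(l <- word_section w x) f l = \sum_(l <- w) (f l + f (ordS l.1, l.2)))%R.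
Proof.
elim: w => [|l w IH]; first by rewrite [in RHS]big_nil big1 // => x _; rewrite big_nil.
rewrite big_cons /= -IH -(sum_letter_section d_gt1 f l).
rewrite [X in (_ + X)%R](reindex_inj (@perm_inj _ (letter_perm l))) -big_split /=.
by apply: eq_bigr => x _; rewrite big_cat.
Qed.

Lemma sum_size_word_section (d_gt1 : 1 < d) w : \sum_x size (word_section w x) = 2 * size w.
Proof.
have := sum_word_section d_gt1 (fun=> 1%N) w.
rewrite (eq_bigr (fun x => size (word_section w x))) => [->|x _]; last exact: sum1_size.
by rewrite big_const_seq count_predT; apply: iter_addn_0.
Qed.

Lemma sum_exp_sum_word_section (d_gt1 : 1 < d) w k :
  (\sum_x exp_sum (word_section w x) (ordS k) = exp_sum w (ordS k) + exp_sum w k)%R.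
Proof.
under eq_bigr do rewrite exp_sumE.
rewrite sum_word_section // !exp_sumE -big_split /=.
by apply: eq_bigr => l _; rewrite /letter_exp /= (inj_eq (@ordS_inj _)).
Qed.

Lemma odd_cycle_alternating_eq0 (d_odd : odd d) (e : 'I_d -> int) :
  (forall j, e (ordS j) = - e j)%R -> forall j, e j = 0%R.
Proof.
move=> eS j.
have e_iter n : e (iter n (@ordS d) j) = ((-1) ^+ n * e j)%R.
  by elim: n => [|n IHn]; rewrite ?mul1r //= eS IHn exprS mulN1r mulNr.
have val_iter n : val (iter n (@ordS d) j) = (j + n) %% d.
  elim: n => [|n IHn]; first by rewrite addn0 modn_small.
  by rewrite /= IHn -addn1 modnDml addn1 addnS.
have iter_d : iter d (@ordS d) j = j by apply: val_inj; rewrite val_iter modnDr modn_small.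
by have := e_iter d; rewrite iter_d -signr_odd d_odd expr1 mulN1r; lia.
Qed.

Lemma size_word_section w x : size (word_section w x) <= size w.
Proof.
elim: w x => [|l w IH] x //=; rewrite size_cat.
by case: letter_section => [l'|] /=; [rewrite ltnS | apply: leqW]; apply: IH.
Qed.

Lemma word_section_cat w1 w2 x :
  word_section (w1 ++ w2) x = word_section w1 x ++ word_section w2 (word_perm w1 x).
Proof. by elim: w1 x => [|l w1 IH] x //=; rewrite IH catA. Qed.

Lemma full_word_section_cat w1 w2 x :
  size (word_section (w1 ++ w2) x) = size (w1 ++ w2) ->
  size (word_section w1 x) = size w1 /\ size (word_section w2 (word_perm w1 x)) = size w2.
Proof.
rewrite word_section_cat !size_cat.
by have := size_word_section w1 x; have := size_word_section w2 (word_perm w1 x); lia.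
Qed.

Lemma full_word_section_neg_pos a b y :
  size (word_section [:: (a, true); (b, false)] y) = 2 ->
  exists c, word_section [:: (a, true); (b, false)] y = [:: (c, true); (c, false)].
Proof.
set y' := letter_perm (a, true) y.
have -> : word_section [:: (a, true); (b, false)] y =
  seq_of_opt (letter_section (a, true) y) ++ seq_of_opt (letter_section (b, false) y').
  by rewrite /= cats0.
case E1: (letter_section _ y) => [[c1 b1]|]; case E2: (letter_section _ y') => [[c2 b2]|] // _.
have [/= -> -> _] := letter_sectionP E1; have [/= -> -> _] := letter_sectionP E2.
by exists y'.
Qed.

Lemma full_word_section_cancel w1 w2 a b x :
  let w := w1 ++ (a, true) :: (b, false) :: w2 in
  size (word_section w x) = size w ->
  exists s1 s2 c, word_section w x = s1 ++ (c, true) :: (c, false) :: s2.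
Proof.
rewrite /= -[_ :: _ :: w2]/([:: (a, true); (b, false)] ++ w2).
move=> /[dup] /full_word_section_cat [_ /full_word_section_cat [/full_word_section_neg_pos [c Ec] _]].
rewrite !word_section_cat Ec => _.
by exists (word_section w1 x), (word_section w2 (word_perm [:: (a, true); (b, false)] (word_perm w1 x))), c.
Qed.

Lemma full_word_section_cons l w x :
  size (word_section (l :: w) x) = (size w).+1 -> exists l', letter_section l x = Some l'.
Proof.
rewrite word_section_cons size_cat; case: letter_section => [l'|]; first by exists l'.
by have := size_word_section w (letter_perm l x); rewrite /=; lia.
Qed.

Definition balanced w := forall k, exp_sum w k = 0%R.

Definition uniform_sign b w := all (fun l => l.2 == b) w.

Lemma uniform_sign_section b w x : uniform_sign b w -> uniform_sign b (word_section w x).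
Proof.
elim: w x => [|l w IH] x // /andP [lb wb].
rewrite word_section_cons /uniform_sign all_cat; apply/andP; split; last exact: IH.
by case E: letter_section => [l'|] //=; have [_ -> _] := letter_sectionP E; rewrite lb.
Qed.

Lemma uniform_sign_unbalanced b w : uniform_sign b w -> w != [::] -> ~ balanced w.
Proof.
case: w => [|[k c] w'] // /allP wb _ bal.
have no_opp : count (pred1 (k, ~~ b)) ((k, c) :: w') = 0.
  apply/eqP; rewrite -leqn0 leqNgt -has_count; apply/hasP => -[l /wb lb /eqP El].
  by move: lb; rewrite El /= eq_sym; case: b {wb El}.
have some_same : 0 < count (pred1 (k, b)) ((k, c) :: w').
  rewrite -has_count; apply/hasP; exists (k, c); first exact: mem_head.
  by have /eqP /= -> := wb _ (mem_head _ _).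
by have := bal k; rewrite /exp_sum; case: b {wb} no_opp some_same => /= -> ?; lia.
Qed.

Section StrongInduction.

Variable n : nat.
Hypothesis IH : forall u : word d, size u < n -> represents_identity u -> balanced u.

Lemma section_balanced_or_full w x : size w <= n -> represents_identity w ->
  balanced (word_section w x) \/ size (word_section w x) = size w.
Proof.
move=> wn /(represents_identity_section x) [_ idsec].
have := size_word_section w x; rewrite leq_eqVlt => /orP [/eqP | short]; first by right.
by left; apply: IH idsec; apply: leq_trans short wn.
Qed.

Lemma balanced_neg_pos (d_gt1 : 1 < d) (d_odd : odd d) w1 w2 a b :
  let w := w1 ++ (a, true) :: (b, false) :: w2 in
  size w <= n -> represents_identity w -> balanced w.
Proof.
move=> w wn idw.
have sec_balanced x : balanced (word_section w x).
  have [// | full] := section_balanced_or_full x wn idw.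
  have [s1 [s2 [c Es]]] := full_word_section_cancel full; rewrite -/w in Es.
  have [_] := represents_identity_section x idw; rewrite Es => /represents_identity_cancel ids k.
  rewrite exp_sum_cancel; apply: IH ids k.
  by move: full wn; rewrite Es !size_cat /=; lia.
apply: odd_cycle_alternating_eq0 => // k.
have := sum_exp_sum_word_section d_gt1 w k; rewrite big1 => [|x _]; last exact: sec_balanced.
by move=> /esym /eqP; rewrite addr_eq0 => /eqP.
Qed.

Lemma uniform_sign_section_nil_or_full b w x :
  size w <= n -> represents_identity w -> uniform_sign b w ->
  word_section w x = [::] \/ size (word_section w x) = size w.
Proof.
move=> wn idw wb; have [bal | ] := section_balanced_or_full x wn idw; last by right.
left; apply/eqP; apply: contraT => sec_ne.
by case: (uniform_sign_unbalanced (uniform_sign_section x wb) sec_ne bal).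
Qed.

Lemma uniform_sign_full_sections (d_gt1 : 1 < d) b i c w' :
  let w := (i, c) :: w' in
  size w <= n -> represents_identity w -> uniform_sign b w ->
  size (word_section w i) = size w /\ size (word_section w (ordS i)) = size w.
Proof.
move=> w wn idw wb.
have others_nil x : x \notin [:: i; ordS i] -> word_section w x = [::].
  move=> xNi; have [// | ] := uniform_sign_section_nil_or_full x wn idw wb.
  rewrite word_section_cons letter_section_None //= /w /=.
  by have := size_word_section w' (letter_perm (i, c) x); lia.
have := sum_size_word_section d_gt1 w; clearbody w.
rewrite (bigD1 i) //= (bigD1 (ordS i)) ?ordS_neq //= big1; last first.
  by move=> x /andP [xNi xNSi]; rewrite others_nil // !inE negb_or xNi xNSi.
by have := size_word_section w i; have := size_word_section w (ordS i); lia.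
Qed.

Lemma uniform_sign_repeat (d_gt2 : 2 < d) b i c j c' w'' :
  let w := (i, c) :: (j, c') :: w'' in
  size w <= n -> represents_identity w -> uniform_sign b w -> j = i.
Proof.
have d_gt1 : 1 < d by apply: ltnW.
move=> w wn idw wb; have [full_i full_Si] := uniform_sign_full_sections d_gt1 wn idw wb.
have next_in_pair y : size (word_section w y) = size w -> letter_perm (i, c) y \in [:: j; ordS j].
  rewrite -[w]cat1s => /full_word_section_cat [_ /full_word_section_cons [l' El']].
  by have [_ _] := letter_sectionP El'.
apply/esym/ordS_in_pair => //.
  by have := next_in_pair _ full_Si; rewrite /letter_perm tpermR.
by have := next_in_pair _ full_i; rewrite /letter_perm tpermL.
Qed.

Lemma uniform_sign_not_identity (d_gt2 : 2 < d) b w :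
  size w <= n -> represents_identity w -> uniform_sign b w -> w = [::].
Proof.
have d_gt1 : 1 < d by apply: ltnW.
have SiNi := ordS_neq d_gt1.
case: w => [|[i c] [|[j c'] w'']] // wn idw wb; exfalso.
  have [] := represents_identity_section i idw.
  by rewrite /= /letter_perm tpermL => /eqP; rewrite (negbTE (SiNi i)).
have ji := uniform_sign_repeat d_gt2 wn idw wb; subst j.
have c'c : c' = c by move: wb => /and3P [/eqP /= -> /eqP /= ->].
subst c'; have [full_i _] := uniform_sign_full_sections d_gt1 wn idw wb.
have [_ idsec] := represents_identity_section i idw.
have [a [a' [s' [Es a'Na]]]] :
    exists a a' s', word_section [:: (i, c), (i, c) & w''] i = (a, c) :: (a', c) :: s' /\ a' != a.
  rewrite !word_section_cons /letter_perm tpermL.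
  case: c {wn idw wb full_i idsec} => /=; rewrite (eq_sym i) (negbTE (SiNi i)) !eqxx /=.
  - by eexists _, _, _; split; first reflexivity; rewrite eq_sym SiNi.
  - by eexists _, _, _; split; first reflexivity; rewrite SiNi.
have := uniform_sign_section i wb; rewrite Es in full_i idsec * => sb.
by move/eqP: a'Na; apply; apply: (uniform_sign_repeat d_gt2 _ idsec sb); rewrite full_i.
Qed.

End StrongInduction.

Lemma sign_sorted_or_neg_pos w :
  (exists w1 w2 a b, w = w1 ++ (a, true) :: (b, false) :: w2) \/
  exists P N, [/\ w = P ++ N, uniform_sign false P & uniform_sign true N].
Proof.
elim: w => [|[a []] w [[w1 [w2 [a' [b' ->]]]] | [P [N [-> PF NT]]]]].
- by right; exists [::], [::].
- by left; exists ((a, true) :: w1), w2, a', b'.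
- case: P PF => [|[b s] P] PF; first by right; exists [::], ((a, true) :: N).
  have -> : s = false by move: PF => /andP [/eqP].
  by left; exists [::], (P ++ N), a, b.
- by left; exists ((a, false) :: w1), w2, a', b'.
- by right; exists ((a, false) :: P), N.
Qed.

Lemma represents_identity_balanced (d_gt2 : 2 < d) (d_odd : odd d) w :
  represents_identity w -> balanced w.
Proof.
have d_gt1 : 1 < d by apply: ltnW.
move: {2}(size w) (leqnn (size w)) => n; elim: n w => [|n IHn] w; first by case: w => // _ _ k.
have IH u : size u < n.+1 -> represents_identity u -> balanced u by move=> ?; apply: IHn.
move=> wn idw.
have [[w1 [w2 [a [b Ew]]]] | [P [N [Ew PF NT]]]] := sign_sorted_or_neg_pos w.
  by rewrite Ew in wn idw *; apply: (balanced_neg_pos IH d_gt1 d_odd wn idw).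
case/lastP: N NT Ew => [|N' [a s]] NT Ew.
  by rewrite Ew cats0 in wn idw *; rewrite (uniform_sign_not_identity IH d_gt2 wn idw PF).
case: P PF Ew => [|[b s'] P'] PF Ew.
  by rewrite Ew in wn idw *; rewrite (uniform_sign_not_identity IH d_gt2 wn idw NT).
have s_neg : s = true by move: NT; rewrite /uniform_sign all_rcons => /andP [/eqP].
have s'_pos : s' = false by move: PF => /andP [/eqP].
subst s s'; move=> k; rewrite Ew exp_sum_catC cat_rcons; apply: (balanced_neg_pos IH d_gt1 d_odd).
  by move: wn; rewrite Ew !size_cat size_rcons /=; lia.
by move: idw; rewrite Ew => /represents_identity_rot; rewrite cat_rcons.
Qed.

End WordSections.

Theorem theorem4p1 (d : nat) (hd : 3 <= d) (hodd : odd d) (w : word d) :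
  represents_identity w -> forall i : 'I_d, exp_sum w i = 0%R.
Proof. exact: represents_identity_balanced. Qed.
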